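(* Let $\mathbb{K}$ be a field of characteristic zero and let $\mathcal{D}=\{\Delta^{p(1)}_{\beta(1)},\ldots,\Delta^{p(k)}_{\beta(k)}\}$ be a finite set of derivations of $\mathbb{K}[x_1,\ldots,x_n]$ of the form $\Delta^{p}_{\beta}=x_1^{p_1}\cdots x_n^{p_n}\sum_{j=1}^n\beta_jx_j\partial_j$ with $p(i)\in\mathbb{Z}^n_{\ge 0}$ and $\beta(i)\in\mathbb{K}^n\setminus\{0\}$, all of positive weight, i.e. $p(i)\neq 0$ for all $i$. Then the Lie algebra $\mathfrak{g}(\mathcal{D})$ generated by $\mathcal{D}$ is finite dimensional if and only if the elements of $\mathcal{D}$ can be renumbered in such a way that the following two conditions hold: 1) if $\beta(i)$ and $\beta(j)$ are proportional, then $\langle\beta(i),p(i)-p(j)\rangle=0$; 2) if $\beta(i)$ and $\beta(j)$ are not proportional and $j>i$, then $\langle\beta(j),p(i)\rangle=0$ and there exists $r_{ij}\in\mathbb{Z}_{\ge 0}$ such that $\langle\beta(i),p(j)+r_{ij}p(i)\rangle=0$.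
   Context: $\partial_i=\partial/\partial x_i$. For $\beta\in\mathbb{K}^n$ and $u\in\mathbb{Z}^n$, $\langle\beta,u\rangle:=\sum_{i=1}^n\beta_iu_i$. The weight of $\Delta^p_\beta$ is $\sum_j p_j$. The Lie bracket is the commutator of derivations, $[D_1,D_2]=D_1\circ D_2-D_2\circ D_1$, and $\mathfrak{g}(\mathcal{D})$ is the smallest Lie subalgebra of the Lie algebra of derivations of $\mathbb{K}[x_1,\ldots,x_n]$ containing $\mathcal{D}$. *)

From HB Require Import structures.
From mathcomp Require Import all_boot all_order all_algebra.
From mathcomp Require Import multinomials.mpoly.
Set Implicit Arguments. Unset Strict Implicit. Unset Printing Implicit Defensive.
Import Order.TTheory GRing.Theory.
Local Open Scope ring_scope.

Definition der (K : fieldType) (n : nat) := {mpoly K[n]} -> {mpoly K[n]}.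

Definition lie_bracket (K : fieldType) (n : nat) (D1 D2 : der K n) : der K n :=
  fun f => D1 (D2 f) - D2 (D1 f).

Definition Delta (K : fieldType) (n : nat) (p : 'I_n -> nat) (beta : 'I_n -> K)
  : der K n :=
  fun f => 'X_[[multinom p j | j < n]] *
           \sum_(j < n) (beta j *: ('X_j * mderiv j f)).

Inductive lie_gen (K : fieldType) (n k : nat) (D : 'I_k -> der K n) : der K n -> Prop :=
  | lg_base i : lie_gen D (D i)
  | lg_zero : lie_gen D (fun _ => 0)
  | lg_add d1 d2 : lie_gen D d1 -> lie_gen D d2 -> lie_gen D (fun f => d1 f + d2 f)
  | lg_scale (c : K) d : lie_gen D d -> lie_gen D (fun f => c *: d f)
  | lg_bracket d1 d2 : lie_gen D d1 -> lie_gen D d2 -> lie_gen D (lie_bracket d1 d2).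

Definition fin_dim (K : fieldType) (n : nat) (S : der K n -> Prop) : Prop :=
  exists s : seq (der K n),
    forall d, S d -> exists c : 'I_(size s) -> K,
      forall f, d f = \sum_(i < size s) c i *: (nth (fun _ => 0) s i) f.

Definition pairing (K : fieldType) (n : nat) (beta : 'I_n -> K) (u : 'I_n -> int) : K :=
  \sum_(l < n) beta l * (u l)%:~R.

Definition proportional (K : fieldType) (n : nat) (b1 b2 : 'I_n -> K) : Prop :=
  exists c : K, forall l, b1 l = c * b2 l.

(* All elements involved are derivations [DeltaM a v = x^a sum_j v_j x_j d_j], and
   [[DeltaM a v, DeltaM b w] = DeltaM (a + b) (<v,b> w - <w,a> v)].

   If the Lie algebra is finite dimensional, the degrees of its nonzero elements
   are bounded, so ad(DeltaM a v) is nilpotent on DeltaM b w when [a] has positive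
   degree.  Read off the coefficients, this gives a [t] with [<v, b + t a> = 0]
   when [w] and [v] are not proportional, and [<v, b + t a> = <v, a>] when [w = v].
   Applying this to pairs of generators and to their brackets yields condition 1)
   and, for non-proportional [v, w], [<w,a> = 0] or [<v,b> = 0].  The pairs with
   [<w,a> = 0] but [<v,b> <> 0] form an acyclic relation (a shortest cycle could be
   shortened by bracketing two consecutive members), and any topological order of
   it satisfies 2).

   Conversely, for an order satisfying 1) and 2), every iterated bracket of
   generators is a multiple of some [b j] of degree [a j + sum_l m_l a_l], where
   every [l] with [m_l > 0] has its whole proportionality class before [j].  The
   roots [r_ij] of 2) then bound each [m_l] by the later ones, so the degrees,
   hence the dimension, are bounded. *)

From HB Require Import structures.
From mathcomp Require Import all_boot all_order all_algebra all_fingroup.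
From mathcomp Require Import multinomials.mpoly.
From mathcomp Require Import ring zify.
From Stdlib Require Import FunctionalExtensionality ClassicalEpsilon Classical.
Import Order.TTheory GRing.Theory.
Local Open Scope ring_scope.

Set Implicit Arguments. Unset Strict Implicit. Unset Printing Implicit Defensive.

(** * Monomial derivations *)

Section MonomialDerivations.
Variables (K : fieldType) (n : nat).
Implicit Types (a b m : 'X_{1..n}) (v w : 'I_n -> K) (D : der K n).

Definition DeltaM a v : der K n :=
  fun f => 'X_[a] * \sum_(j < n) (v j *: ('X_j * mderiv j f)).

Definition dotm v m : K := \sum_(j < n) v j * (m j)%:R.

Lemma dotm0 v : dotm v 0%MM = 0.
Proof. by rewrite /dotm big1 // => j _; rewrite mnm0E mulr0. Qed.

Lemma dot0m m : dotm (fun _ => 0) m = 0.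
Proof. by rewrite /dotm big1 // => j _; rewrite mul0r. Qed.

Lemma dotmD v a b : dotm v (a + b)%MM = dotm v a + dotm v b.
Proof.
by rewrite /dotm -big_split; apply: eq_bigr => j _; rewrite mnmDE natrD mulrDr.
Qed.

Lemma dotm_sum v (I : Type) (r : seq I) (F : I -> 'X_{1..n}) :
  dotm v (\sum_(i <- r) F i)%MM = \sum_(i <- r) dotm v (F i).
Proof. exact: (big_morph _ (dotmD v) (dotm0 v)). Qed.

Lemma dotmMn v m t : dotm v (m *+ t)%MM = t%:R * dotm v m.
Proof.
by rewrite /dotm mulr_sumr; apply: eq_bigr => j _; rewrite mulmnE natrM; ring.
Qed.

Lemma dotm1 v l : dotm v U_(l)%MM = v l.
Proof.
rewrite /dotm (bigD1 l) //= mnm1E eqxx mulr1 big1 ?addr0 // => j /negbTE jl.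
by rewrite mnm1E eq_sym jl mulr0.
Qed.

Lemma dotmZ c v m : dotm (fun l => c * v l) m = c * dotm v m.
Proof. by rewrite /dotm mulr_sumr; apply: eq_bigr => j _; rewrite mulrA. Qed.

Lemma eq_dotm v w m : v =1 w -> dotm v m = dotm w m.
Proof. by move=> e; apply: eq_bigr => j _; rewrite e. Qed.

Lemma DeltaM_X a v m : DeltaM a v 'X_[m] = dotm v m *: 'X_[a + m].
Proof.
rewrite /DeltaM /dotm scaler_suml mulr_sumr; apply: eq_bigr => j _.
rewrite mderivX -!scalerAr !scalerA -scalerA.
have [->|mj] := eqVneq (m j) 0%N; first by rewrite mulr0n mulr0 !scale0r scaler0.
rewrite scalerA; congr (_ *: _); rewrite -!(mpolyXD K); congr ('X_[_]).
apply/mnmP => l; rewrite !mnmDE mnmBE mnm1E.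
case: eqP => [<-|_]; last by rewrite add0n subn0.
by rewrite add1n subn1 prednK // lt0n.
Qed.

Lemma DeltaM_linear a v : linear (DeltaM a v).
Proof.
move=> c f g; rewrite /DeltaM scalerAr -mulrDr; congr (_ * _).
rewrite scaler_sumr -big_split; apply: eq_bigr => j _.
by rewrite mderivD mderivZ mulrDr scalerDr -scalerAr !scalerA mulrC.
Qed.

Lemma linear_der0 D : linear D -> D 0 = 0.
Proof.
by move=> HD; have := HD (-1) 0 0; rewrite scaler0 addr0 scaleN1r addNr.
Qed.

Lemma linear_der_sum D (I : Type) (r : seq I) (c : I -> K) (F : I -> {mpoly K[n]}) :
  linear D -> D (\sum_(i <- r) c i *: F i) = \sum_(i <- r) c i *: D (F i).
Proof.
move=> HD; elim: r => [|x r IH]; first by rewrite !big_nil linear_der0.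
by rewrite !big_cons HD IH.
Qed.

Lemma DeltaM_sum a v (I : Type) (r : seq I) (F : I -> {mpoly K[n]}) :
  DeltaM a v (\sum_(i <- r) F i) = \sum_(i <- r) DeltaM a v (F i).
Proof.
have := linear_der_sum r (fun _ => 1) F (DeltaM_linear a v).
by under eq_bigr do rewrite scale1r; under [in RHS]eq_bigr do rewrite scale1r.
Qed.

Lemma linear_der_eq D1 D2 : linear D1 -> linear D2 ->
  (forall m, D1 'X_[m] = D2 'X_[m]) -> D1 =1 D2.
Proof.
move=> H1 H2 Hm f; rewrite (mpolyE f) !linear_der_sum //.
by apply: eq_bigr => m _; rewrite Hm.
Qed.

Lemma lie_bracket_linear D1 D2 : linear D1 -> linear D2 -> linear (lie_bracket D1 D2).
Proof.
move=> H1 H2 c f g; rewrite /lie_bracket H2 H1 H1 H2.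
by rewrite scalerBr addrACA opprD addrA.
Qed.

Lemma DeltaMZ a v c f : DeltaM a v (c *: f) = c *: DeltaM a v f.
Proof.
by rewrite -[c *: f]addr0 DeltaM_linear linear_der0 ?addr0 //; apply: DeltaM_linear.
Qed.

Definition bracketv a v b w : 'I_n -> K := fun l => dotm v b * w l - dotm w a * v l.

Lemma dotm_bracketv a v b w m :
  dotm (bracketv a v b w) m = dotm v b * dotm w m - dotm w a * dotm v m.
Proof.
rewrite /bracketv /dotm !mulr_sumr -sumrB.
by apply: eq_bigr => j _; rewrite mulrBl !mulrA.
Qed.

Lemma lie_bracket_DeltaM a v b w :
  lie_bracket (DeltaM a v) (DeltaM b w) =1 DeltaM (a + b) (bracketv a v b w).
Proof.
apply: linear_der_eq; [exact/lie_bracket_linear/DeltaM_linear/DeltaM_linear|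
  exact: DeltaM_linear|] => m.
rewrite /lie_bracket !DeltaM_X !DeltaMZ !DeltaM_X !scalerA.
rewrite !addmA [(b + a)%MM]addmC -scalerBl; congr (_ *: _).
by rewrite dotm_bracketv !dotmD; ring.
Qed.

Lemma scale_DeltaM c a v f : c *: DeltaM a v f = DeltaM a (fun l => c * v l) f.
Proof.
rewrite /DeltaM scalerAr scaler_sumr; congr (_ * _); apply: eq_bigr => j _.
by rewrite scalerA.
Qed.

Definition unitv l : 'I_n -> K := fun z => (z == l)%:R.

Lemma DeltaM_unitv a v f : DeltaM a v f = \sum_(l < n) v l *: DeltaM a (unitv l) f.
Proof.
rewrite /DeltaM; under [RHS]eq_bigr => l _ do rewrite scalerAr scaler_sumr.
rewrite -mulr_sumr exchange_big /=; congr (_ * _); apply: eq_bigr => j _.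
rewrite (bigD1 j) //= big1 ?addr0; first by rewrite /unitv eqxx scale1r.
by move=> l /negbTE lj; rewrite /unitv eq_sym lj scale0r scaler0.
Qed.

End MonomialDerivations.

Section Proportionality.
Variables (K : fieldType) (n : nat).
Implicit Types v w : 'I_n -> K.

Lemma proportional_refl v : proportional v v.
Proof. by exists 1 => l; rewrite mul1r. Qed.

Lemma proportional_sym v w : (exists l, v l != 0) -> proportional v w -> proportional w v.
Proof.
move=> [l0 h0] [c Hc]; have c0 : c != 0.
  by apply: contraNneq h0 => c0; rewrite Hc c0 mul0r.
by exists c^-1 => l; rewrite Hc mulKf.
Qed.

Lemma proportional_trans v1 v2 v3 :
  proportional v1 v2 -> proportional v2 v3 -> proportional v1 v3.
Proof. by move=> [c1 h1] [c2 h2]; exists (c1 * c2) => x; rewrite h1 h2 mulrA. Qed.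

Lemma proportional_dotm v w m : proportional v w -> dotm w m = 0 -> dotm v m = 0.
Proof. by move=> [c h] e; rewrite (eq_dotm _ h) dotmZ e mulr0. Qed.

Lemma nonproportional_comb v w (B C : K) : B != 0 -> (exists l, v l != 0) ->
  ~ proportional w v -> ~ proportional v (fun l => B * w l - C * v l).
Proof.
move=> B0 [l0 hv0] Hnp [c Hc]; apply: Hnp.
have c0 : c != 0 by apply: contraNneq hv0 => c0; rewrite Hc c0 mul0r.
exists ((1 + c * C) / (c * B)) => l.
apply: (mulfI (mulf_neq0 c0 B0)); rewrite mulrA mulrCA divff ?mulf_neq0 // mulr1.
have -> : c * B * w l = c * (B * w l - C * v l) + c * C * v l by ring.
by rewrite -Hc; ring.
Qed.

End Proportionality.

Section Spans.
Variables (K : fieldType) (n : nat) (s : seq (der K n)).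

Definition in_span (d : der K n) := exists c : 'I_(size s) -> K,
  forall f, d f = \sum_(i < size s) c i *: nth (fun _ => 0) s i f.

Lemma in_span_eq d d' : in_span d -> d =1 d' -> in_span d'.
Proof. by move=> [c hc] e; exists c => f; rewrite -e hc. Qed.

Lemma in_span0 : in_span (fun _ => 0).
Proof. by exists (fun _ => 0) => f; rewrite big1 // => i _; rewrite scale0r. Qed.

Lemma in_spanD d1 d2 : in_span d1 -> in_span d2 -> in_span (fun f => d1 f + d2 f).
Proof.
move=> [c1 h1] [c2 h2]; exists (fun i => c1 i + c2 i) => f.
by rewrite h1 h2 -big_split; apply: eq_bigr => i _; rewrite scalerDl.
Qed.

Lemma in_spanZ c d : in_span d -> in_span (fun f => c *: d f).
Proof.
move=> [c1 h1]; exists (fun i => c * c1 i) => f.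
by rewrite h1 scaler_sumr; apply: eq_bigr => i _; rewrite scalerA.
Qed.

Lemma in_span_sum (I : Type) (r : seq I) (G : I -> der K n) :
  (forall x, List.In x r -> in_span (G x)) -> in_span (fun f => \sum_(x <- r) G x f).
Proof.
elim: r => [|x r IH] H; first by apply: in_span_eq in_span0 _ => f; rewrite big_nil.
have Hr : in_span (fun f => \sum_(y <- r) G y f) by apply: IH => y hy; apply: H; right.
by apply: in_span_eq (in_spanD (H x (or_introl erefl)) Hr) _ => f; rewrite big_cons.
Qed.

End Spans.

Lemma in_span_map (K : fieldType) (n : nat) (T : eqType) (F : T -> der K n) (r : seq T) x :
  x \in r -> in_span (map F r) (F x).
Proof.
move=> xr; have ix : (index x r < size (map F r))%N by rewrite size_map index_mem.
exists (fun i => ((i : nat) == index x r)%:R) => f.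
rewrite (bigD1 (Ordinal ix)) //= eqxx scale1r big1 ?addr0.
  by rewrite (nth_map x) ?index_mem // nth_index.
by move=> i /negbTE ni; rewrite -val_eqE /= in ni; rewrite ni scale0r.
Qed.

Lemma fin_dim_spanned (K : fieldType) (n : nat) (S : der K n -> Prop) :
  fin_dim S <-> exists s, forall d, S d -> in_span s d.
Proof. by []. Qed.

Definition DeltaM_basis (K : fieldType) (n N : nat) : seq (der K n) :=
  [seq DeltaM (val u.1 : 'X_{1..n}) (unitv K u.2) | u <- enum {: 'X_{1..n < N.+1} * 'I_n}].

Lemma DeltaM_in_span (K : fieldType) (n N : nat) (a : 'X_{1..n}) (v : 'I_n -> K) :
  (mdeg a <= N)%N -> in_span (DeltaM_basis K n N) (DeltaM a v).
Proof.
rewrite -ltnS => ha.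
apply: in_span_eq (in_span_sum (G := fun l f => v l *: DeltaM a (unitv K l) f) _) _.
  move=> l _; apply/in_spanZ/(in_span_map _ (x := (BMultinom ha, l))).
  by rewrite mem_enum.
by move=> f; rewrite [RHS]DeltaM_unitv.
Qed.

Section GeneratedAlgebra.
Variables (K : fieldType) (n k : nat) (D : 'I_k -> der K n).
Implicit Types (a b : 'X_{1..n}) (v w : 'I_n -> K).
Local Notation L := (lie_gen D).

Lemma lie_gen_eq d d' : L d -> d =1 d' -> L d'.
Proof. by move=> Hd e; have <- : d = d' by apply: functional_extensionality. Qed.

Lemma lie_gen_DeltaM_eq a v w : L (DeltaM a v) -> v =1 w -> L (DeltaM a w).
Proof. by move=> H /functional_extensionality <-. Qed.

Lemma lie_gen_bracketv a v b w :
  L (DeltaM a v) -> L (DeltaM b w) -> L (DeltaM (a + b) (bracketv a v b w)).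
Proof. by move=> H1 H2; apply: lie_gen_eq (lg_bracket H1 H2) (lie_bracket_DeltaM _ _ _ _). Qed.

Lemma lie_gen_DeltaMZ c a v : L (DeltaM a v) -> L (DeltaM a (fun l => c * v l)).
Proof. by move=> H; apply: lie_gen_eq (lg_scale c H) _ => f; rewrite scale_DeltaM. Qed.

End GeneratedAlgebra.

Lemma lie_gen_perm (K : fieldType) (n k : nat) (D : 'I_k -> der K n) (s : {perm 'I_k}) d :
  lie_gen D d -> lie_gen (fun i => D (s i)) d.
Proof.
elim=> {d} [i| |d1 d2 _ h1 _ h2|c d _ h|d1 d2 _ h1 _ h2]; try by constructor.
by rewrite -[i](permKV s); apply: (lg_base (fun j => D (s j))).
Qed.

Section Pairings.
Variables (K : fieldType) (n : nat).
Implicit Types (v : 'I_n -> K) (q : 'I_n -> nat).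

Definition mnm_of q : 'X_{1..n} := [multinom q j | j < n].

Lemma pairing_dotm v q : pairing v (fun l => (q l)%:Z) = dotm v (mnm_of q).
Proof. by apply: eq_bigr => j _; rewrite mnmE -pmulrn. Qed.

Lemma pairingB v q1 q2 :
  pairing v (fun l => (q1 l)%:Z - (q2 l)%:Z) = dotm v (mnm_of q1) - dotm v (mnm_of q2).
Proof.
rewrite /pairing /dotm -sumrB; apply: eq_bigr => j _.
by rewrite !mnmE intrB -!pmulrn mulrBr.
Qed.

Lemma pairing_chain v q1 q2 (t : nat) :
  pairing v (fun l => (q1 l)%:Z + (t * q2 l)%:Z) = dotm v (mnm_of q1 + mnm_of q2 *+ t)%MM.
Proof.
apply: eq_bigr => j _; rewrite mnmDE mulmnE !mnmE -PoszD -pmulrn.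
by rewrite [(q2 j * t)%N]mulnC.
Qed.

End Pairings.

Definition admissible_order (K : fieldType) (n k : nat)
    (p : 'I_k -> 'I_n -> nat) (beta : 'I_k -> 'I_n -> K) (s : {perm 'I_k}) :=
  (forall i j : 'I_k, proportional (beta (s i)) (beta (s j)) ->
     pairing (beta (s i)) (fun l => (p (s i) l)%:Z - (p (s j) l)%:Z) = 0) /\
  (forall i j : 'I_k, ~ proportional (beta (s i)) (beta (s j)) -> (i < j)%N ->
     pairing (beta (s j)) (fun l => (p (s i) l)%:Z) = 0 /\
     exists r : nat,
       pairing (beta (s i)) (fun l => (p (s j) l)%:Z + (r * p (s i) l)%:Z) = 0).

(** * Finite dimensionality forces an admissible order *)

Section AdjointIterates.
Variables (K : fieldType) (n : nat).
Implicit Types (a b : 'X_{1..n}) (v w : 'I_n -> K).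

Fixpoint ad_iter a v b w (m : nat) : 'I_n -> K :=
  if m is m'.+1 then bracketv a v (b + a *+ m') (ad_iter a v b w m') else w.

Lemma ad_iter_comb a v b w m : exists d, forall l,
  ad_iter a v b w m l = (\prod_(t < m) dotm v (b + a *+ t)) * w l + d * v l.
Proof.
elim: m => [|m [d IH]] /=; first by exists 0 => l; rewrite big_ord0 mul1r mul0r addr0.
exists (dotm v (b + a *+ m) * d - dotm (ad_iter a v b w m) a) => l.
by rewrite /bracketv IH big_ord_recr /=; ring.
Qed.

Lemma ad_iter_self a v b m l :
  ad_iter a v b v m l = (\prod_(t < m) (dotm v (b + a *+ t) - dotm v a)) * v l.
Proof.
elim: m l => [|m IH] l /=; first by rewrite big_ord0 mul1r.
by rewrite /bracketv IH big_ord_recr /= (eq_dotm _ IH) dotmZ; ring.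
Qed.

End AdjointIterates.

Section FiniteDimensional.
Variables (K : fieldType) (n k : nat) (D : 'I_k -> der K n).
Implicit Types (a b : 'X_{1..n}) (v w : 'I_n -> K).
Local Notation L := (lie_gen D).
Hypothesis Hfin : fin_dim L.

Lemma fin_dim_mdeg_bounded : exists N, forall a v l,
  L (DeltaM a v) -> v l != 0 -> (mdeg a < N)%N.
Proof.
have [s Hs] := Hfin.
pose d0 : der K n := fun _ => 0.
exists (\max_(l < n) \max_(i < size s) msize (nth d0 s i 'X_l))%N => a v l La vl.
have [c Hc] := Hs _ La.
have := Hc 'X_l; rewrite DeltaM_X dotm1 => e.
apply: (@leq_trans (msize (v l *: 'X_[(a + U_(l))%MM] : {mpoly K[n]}))).
  by rewrite msizeZ // msizeX mdegD mdeg1 addn1.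
rewrite e.
apply: (big_ind (fun x : {mpoly K[n]} => msize x <= _)%N).
- by rewrite msize0.
- by move=> x y hx hy; apply: leq_trans (msizeD_le _ _) _; rewrite geq_max hx hy.
move=> i _; apply: leq_trans (msizeZ_le _ _) _.
apply: leq_trans (leq_bigmax_cond l isT); exact: (leq_bigmax_cond i isT).
Qed.

Lemma lie_gen_ad_iter a v b w m : L (DeltaM a v) -> L (DeltaM b w) ->
  L (DeltaM (b + a *+ m) (ad_iter a v b w m)).
Proof.
move=> La Lb; elim: m => [|m IH] /=; first by rewrite mulm0n addm0.
suff -> : (b + a *+ m.+1 = a + (b + a *+ m))%MM by exact: lie_gen_bracketv.
by apply/mnmP => i; rewrite !mnmDE !mulmnE mulnS; lia.
Qed.

Lemma fin_dim_ad_nilpotent a v b w : L (DeltaM a v) -> L (DeltaM b w) ->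
  (0 < mdeg a)%N -> exists m, forall l, ad_iter a v b w m l = 0.
Proof.
move=> La Lb ha; have [N HN] := fin_dim_mdeg_bounded.
exists N => l; apply/eqP/negP => /negP /(HN _ _ _ (lie_gen_ad_iter N La Lb)).
rewrite mdegD mdegMn ltnNge => /negP; apply.
by apply: leq_trans (leq_addl _ _); apply: leq_pmull.
Qed.

Lemma fin_dim_nonproportional_root a v b w : L (DeltaM a v) -> L (DeltaM b w) ->
  (0 < mdeg a)%N -> ~ proportional w v -> exists t, dotm v (b + a *+ t) = 0.
Proof.
move=> La Lb ha Hnp; apply: NNPP => Hno.
have [m Hm] := fin_dim_ad_nilpotent La Lb ha.
have [d Hd] := ad_iter_comb a v b w m.
have cm0 : \prod_(t < m) dotm v (b + a *+ t) != 0.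
  by apply/prodf_neq0 => t _; apply/eqP => e; apply: Hno; exists t.
apply: Hnp; exists (- d / \prod_(t < m) dotm v (b + a *+ t)) => l.
move: (Hm l); rewrite Hd => /eqP; rewrite addr_eq0 => /eqP e.
by rewrite -[w l](mulKf cm0) e; ring.
Qed.

Lemma fin_dim_proportional_root a v b : L (DeltaM a v) -> L (DeltaM b v) ->
  (0 < mdeg a)%N -> (exists l, v l != 0) -> exists t, dotm v (b + a *+ t) = dotm v a.
Proof.
move=> La Lb ha [l0 hl0]; apply: NNPP => Hno.
have [m Hm] := fin_dim_ad_nilpotent La Lb ha.
move: (Hm l0); rewrite ad_iter_self => /eqP; rewrite mulf_eq0 (negbTE hl0) orbF.
apply/negP/prodf_neq0 => t _; rewrite subr_eq0; apply/eqP => e; apply: Hno.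
by exists t.
Qed.

End FiniteDimensional.

Lemma natr_inj_pchar0 (K : fieldType) (m1 m2 : nat) : [pchar K] =i pred0 ->
  m1%:R = m2%:R :> K -> m1 = m2.
Proof.
move=> HK; have natr_eq0 := (pcharf0P K).1 HK.
wlog le12 : m1 m2 / (m1 <= m2)%N.
  by move=> H; case: (leqP m1 m2) => [/H//|/ltnW h /esym /(H _ _ h)].
move=> e; rewrite -(subnKC le12) in e *; rewrite natrD -{1}[m1%:R]addr0 in e.
by move/addrI: e => /esym/eqP; rewrite natr_eq0 => /eqP ->; rewrite addn0.
Qed.

Lemma addn_eq_muln_cases (t t' : nat) :
  (t + t' = t * t')%N -> (t = 0 /\ t' = 0)%N \/ (t = 2 /\ t' = 2)%N.
Proof. by case: t => [|[|[|t]]] h; try lia; case: t' h => [|[|[|t']]] h; nia. Qed.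

Section WeightEquations.
Variables (K : fieldType) (HK : [pchar K] =i pred0).

(* [A, B, C, Dd] stand for [<v,a>, <v,b>, <w,a>, <w,b>]; the last four hypotheses
   are the vanishing weights along the [a]-string through [b], the [b]-string
   through [a], and the [(a + b)]-strings through [a] and through [b]. *)
Lemma nonproportional_weights_absurd (A B C Dd : K) (r r' t t' : nat) :
  B != 0 -> C != 0 -> B + r%:R * A = 0 -> C + r'%:R * Dd = 0 ->
  B * (C + t%:R * (C + Dd)) - C * (A + t%:R * (A + B)) = 0 ->
  B * (Dd + t'%:R * (C + Dd)) - C * (B + t'%:R * (A + B)) = 0 -> False.
Proof.
move=> B0 C0 e1 e2 e3 e4.
have r0 : (0 < r)%N.
  by rewrite lt0n; apply: contra B0 => /eqP rE; rewrite -e1 rE mul0r addr0.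
have r'0 : (0 < r')%N.
  by rewrite lt0n; apply: contra C0 => /eqP rE; rewrite -e2 rE mul0r addr0.
have BC0 : B * C != 0 by rewrite mulf_neq0.
have X0 : (r * r' + r' + t * r')%:R = (t * r)%:R :> K.
  apply/eqP; rewrite -subr_eq0; apply/eqP; apply: (mulfI BC0); rewrite mulr0.
  have -> : B * C * ((r * r' + r' + t * r')%:R - (t * r)%:R) =
    r%:R * r'%:R * (B * (C + t%:R * (C + Dd)) - C * (A + t%:R * (A + B)))
    + r'%:R * C * (1 + t%:R) * (B + r%:R * A) - t%:R * r%:R * B * (C + r'%:R * Dd).
    by rewrite !natrD !natrM; ring.
  by rewrite e1 e2 e3; ring.
have Y0 : (t' * r')%:R = (r + r * r' + t' * r)%:R :> K.
  apply/eqP; rewrite -subr_eq0; apply/eqP; apply: (mulfI BC0); rewrite mulr0.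
  have -> : B * C * ((t' * r')%:R - (r + r * r' + t' * r)%:R) =
    r%:R * r'%:R * (B * (Dd + t'%:R * (C + Dd)) - C * (B + t'%:R * (A + B)))
    - r%:R * B * (1 + t'%:R) * (C + r'%:R * Dd) + t'%:R * r'%:R * C * (B + r%:R * A).
    by rewrite !natrD !natrM; ring.
  by rewrite e1 e2 e4; ring.
move: (natr_inj_pchar0 HK X0) (natr_inj_pchar0 HK Y0) => {X0 Y0} X0 Y0.
have : (r' < r)%N by nia.
have : (r < r')%N by nia.
lia.
Qed.

End WeightEquations.

Section FiniteDimensionalPairs.
Variables (K : fieldType) (HK : [pchar K] =i pred0) (n k : nat) (D : 'I_k -> der K n).
Implicit Types (a b : 'X_{1..n}) (v w : 'I_n -> K).
Local Notation L := (lie_gen D).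
Hypothesis Hfin : fin_dim L.

Lemma fin_dim_proportional_dotm a v b w : L (DeltaM a v) -> L (DeltaM b w) ->
  (0 < mdeg a)%N -> (0 < mdeg b)%N -> (exists l, v l != 0) -> (exists l, w l != 0) ->
  proportional w v -> dotm v a = dotm v b.
Proof.
move=> La Lb ha hb hv [l1 hw1] [c Hc].
have c0 : c != 0 by apply: contraNneq hw1 => c0; rewrite Hc c0 mul0r.
have Lb' : L (DeltaM b v).
  by apply: lie_gen_DeltaM_eq (lie_gen_DeltaMZ c^-1 Lb) _ => l; rewrite Hc mulKf.
set F := dotm v a; set G := dotm v b.
have [t e1] := fin_dim_proportional_root Hfin La Lb' ha hv.
have [t' e2] := fin_dim_proportional_root Hfin Lb' La hb hv.
rewrite dotmD dotmMn -/F -/G in e1; rewrite dotmD dotmMn -/F -/G in e2.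
apply: NNPP => hFG.
have GF0 : G - F != 0 by rewrite subr_eq0; apply/eqP => e; apply: hFG.
have Lab : L (DeltaM (a + b) v).
  apply: lie_gen_DeltaM_eq (lie_gen_DeltaMZ (G - F)^-1 (lie_gen_bracketv La Lb')) _ => l.
  by rewrite /bracketv -/F -/G -mulrBl mulKf.
have hab : (0 < mdeg (a + b)%MM)%N by rewrite mdegD ltn_addr.
have [t'' e3] := fin_dim_proportional_root Hfin Lab La hab hv.
rewrite dotmD dotmMn dotmD -/F -/G in e3.
have key : F * ((t + t')%:R - (t * t')%:R) =
   (F + t'%:R * G - G) - (t'%:R - 1) * (G + t%:R * F - F).
  by rewrite natrD natrM; ring.
rewrite e1 e2 !subrr mulr0 subr0 in key.
move/eqP: key; rewrite mulf_eq0 => /orP [/eqP F0|].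
  by apply: hFG; move: e1; rewrite F0 mulr0 addr0 => ->.
rewrite subr_eq0 => /eqP /(natr_inj_pchar0 HK) /addn_eq_muln_cases.
move=> [[tE _]|[tE _]]; rewrite tE in e1.
  by apply: hFG; move: e1; rewrite mul0r addr0.
(* t = t' = 2 gives G = - F, which the [(a + b)]-string through [a] rules out *)
have G' : G = - F by rewrite -[G](addrK (2%:R * F)) e1; ring.
have F0 : F = 0 by move: e3; rewrite G' subrr mulr0 addr0.
by apply: hFG; rewrite G' F0 oppr0.
Qed.

Lemma fin_dim_nonproportional_dotm a v b w : L (DeltaM a v) -> L (DeltaM b w) ->
  (0 < mdeg a)%N -> (0 < mdeg b)%N -> (exists l, v l != 0) -> (exists l, w l != 0) ->
  ~ proportional w v -> dotm w a = 0 \/ dotm v b = 0.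
Proof.
move=> La Lb ha hb hv hw Hnp.
have Hnp' : ~ proportional v w by move/(proportional_sym hv).
apply: NNPP => Hno.
have B0 : dotm v b != 0 by apply/eqP => e; apply: Hno; right.
have C0 : dotm w a != 0 by apply/eqP => e; apply: Hno; left.
have Lab := lie_gen_bracketv La Lb.
have hab : (0 < mdeg (a + b)%MM)%N by rewrite mdegD ltn_addr.
have np1 : ~ proportional v (bracketv a v b w) by exact: nonproportional_comb.
have np2 : ~ proportional w (bracketv a v b w).
  have -> : bracketv a v b w = fun l => - dotm w a * v l - - dotm v b * w l.
    by apply: functional_extensionality => l; rewrite /bracketv; ring.
  by apply: nonproportional_comb; rewrite ?oppr_eq0.
have [r e1] := fin_dim_nonproportional_root Hfin La Lb ha Hnp.
have [r' e2] := fin_dim_nonproportional_root Hfin Lb La hb Hnp'.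
have [t e3] := fin_dim_nonproportional_root Hfin Lab La hab np1.
have [t' e4] := fin_dim_nonproportional_root Hfin Lab Lb hab np2.
rewrite dotmD dotmMn in e1; rewrite dotmD dotmMn in e2.
rewrite dotm_bracketv !(dotmD, dotmMn) in e3.
rewrite dotm_bracketv !(dotmD, dotmMn) in e4.
exact: (nonproportional_weights_absurd HK B0 C0 e1 e2 e3 e4).
Qed.

End FiniteDimensionalPairs.

Section TopologicalOrder.
Variables (k : nat) (R : rel 'I_k).

Lemma exists_perm_homo (f : 'I_k -> nat) :
  exists s : {perm 'I_k}, forall i j : 'I_k, (i <= j)%N -> (f (s i) <= f (s j))%N.
Proof.
pose le_f := fun x y => (f x <= f y)%N.
pose srt := sort le_f (enum 'I_k).
have size_srt : size srt = k by rewrite size_sort size_enum_ord.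
have uniq_srt : uniq srt by rewrite sort_uniq enum_uniq.
pose g (i : 'I_k) := nth i srt i.
have g_inj : injective g.
  move=> i j; rewrite /g (set_nth_default i j) ?size_srt // => e.
  by apply/val_inj/eqP; rewrite -(nth_uniq i _ _ uniq_srt) ?size_srt ?e ?ltn_ord.
exists (perm g_inj) => i j lij; rewrite !permE /g (set_nth_default i j) ?size_srt //.
have srt_sorted : sorted le_f srt by apply: sort_sorted => x y; exact: leq_total.
apply: (sorted_leq_nth (fun y x z => @leq_trans (f y) (f x) (f z)) _ i srt_sorted);
  by rewrite ?inE ?size_srt.
Qed.

Lemma card_connect_lt x y : R x y -> ~~ connect R y x ->
  (#|[set z | connect R z x]| < #|[set z | connect R z y]|)%N.
Proof.
move=> Rxy nyx; apply/proper_card/properP; split.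
  apply/subsetP => z; rewrite !inE => zx.
  exact: connect_trans zx (connect1 Rxy).
by exists y; rewrite inE ?connect0.
Qed.

Lemma exists_topological_perm : (forall x y, R x y -> ~~ connect R y x) ->
  exists s : {perm 'I_k}, forall i j, R (s i) (s j) -> (i < j)%N.
Proof.
move=> Hacyc; have [s Hs] := exists_perm_homo (fun x => #|[set z | connect R z x]|).
exists s => i j Rij; rewrite ltnNge; apply/negP => /Hs.
by rewrite leqNgt card_connect_lt // Hacyc.
Qed.

End TopologicalOrder.

(* Any order as in the theorem must put [x] before [y] when [precedes x y]. *)
Definition precedes (K : fieldType) (n : nat) (x y : 'X_{1..n} * ('I_n -> K)) :=
  [/\ ~ proportional x.2 y.2, dotm y.2 x.1 = 0 & dotm x.2 y.1 != 0].

Section Precedence.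
Variables (K : fieldType) (HK : [pchar K] =i pred0) (n k : nat) (D : 'I_k -> der K n).
Local Notation L := (lie_gen D).
Local Notation elem := ('X_{1..n} * ('I_n -> K))%type.
Implicit Types x y z : elem.
Hypothesis Hfin : fin_dim L.

Definition pos_elem x := [/\ L (DeltaM x.1 x.2), (0 < mdeg x.1)%N & exists l, x.2 l != 0].

Lemma pos_elem_bracket x y : pos_elem x -> pos_elem y -> precedes x y ->
  pos_elem ((x.1 + y.1)%MM, y.2).
Proof.
move=> [Lx hx vx] [Ly hy vy] [_ e1 e2]; split => //=; last by rewrite mdegD ltn_addr.
apply: lie_gen_DeltaM_eq (lie_gen_DeltaMZ (dotm x.2 y.1)^-1 (lie_gen_bracketv Lx Ly)) _.
by move=> l; rewrite /bracketv e1 mul0r subr0 mulKf.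
Qed.

Lemma precedes2_dotm x y z : pos_elem x -> pos_elem y -> pos_elem z ->
  precedes x y -> precedes y z -> dotm z.2 x.1 = 0.
Proof.
move=> Px Py [Lz hz vz] Pxy [npyz eyz nyz].
have [Lxy hxy vxy] := pos_elem_bracket Px Py Pxy.
have np : ~ proportional z.2 y.2 by move=> /(proportional_sym vz).
have [|h] := fin_dim_nonproportional_dotm HK Hfin Lxy Lz hxy hz vxy vz np.
  by rewrite /= dotmD eyz addr0.
by move: nyz; rewrite h eqxx.
Qed.

Fixpoint precedes_path x (l : seq elem) : Prop :=
  if l is y :: l' then [/\ pos_elem y, precedes x y & precedes_path y l'] else True.

Lemma pos_elem_last x l : pos_elem x -> precedes_path x l -> pos_elem (last x l).
Proof. by elim: l x => [|y l IH] x //= Px [Py _ pp]; apply: IH. Qed.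

(* A shortest cycle [x, y, w, ..., z] gets shorter when [x, y] is replaced
   by [x], or by their bracket [((x.1 + y.1), y.2)]. *)
Lemma precedes_acyclic x l : pos_elem x -> precedes_path x l -> ~ precedes (last x l) x.
Proof.
move: {2}(size l) (erefl (size l)) => N; elim: N x l => [|N IH] x [|y l] //=.
  by move=> _ _ _ [np _ _]; apply: np; apply: proportional_refl.
case: l => [|w l'] /=.
  by move=> _ _ [_ [_ e _] _] [_ _ ne]; move: ne; rewrite e eqxx.
move=> [sz] Px [Py Pxy [Pw Pyw pp]] Pzx; set z := last w l' in Pzx.
have Pz : pos_elem z by apply: (pos_elem_last Pw).
have h1 : dotm y.2 z.1 = 0 by apply: (precedes2_dotm Pz Px Py).
have h2 : dotm w.2 x.1 = 0 by apply: (precedes2_dotm Px Py Pw).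
have [_ exy _] := Pxy; have [npyw eyw nyw] := Pyw; have [npzx _ nzx] := Pzx.
have [[c Hc]|npzy] := classic (proportional z.2 y.2).
  by move: nzx; rewrite (eq_dotm _ Hc) dotmZ exy mulr0 eqxx.
have [e|ne] := classic (dotm z.2 (x.1 + y.1)%MM = 0).
  apply: (IH y (w :: l')) => //=; split => //.
  by apply: contra nzx => /eqP e'; move: e; rewrite dotmD e' addr0 => ->.
apply: (IH ((x.1 + y.1)%MM, y.2) (w :: l')) => //=.
- exact: pos_elem_bracket.
- by split=> //; split=> //=; rewrite dotmD h2 eyw addr0.
- by split=> //; apply/eqP.
Qed.

End Precedence.

Section NecessaryCondition.
Variables (K : fieldType) (HK : [pchar K] =i pred0) (n k : nat)
  (p : 'I_k -> 'I_n -> nat) (beta : 'I_k -> 'I_n -> K).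
Hypothesis Hbeta : forall i, exists l, beta i l != 0.
Hypothesis Hp : forall i, exists l, p i l != 0%N.
Let D i := Delta (p i) (beta i).
Hypothesis Hfin : fin_dim (lie_gen D).

Let gen i := (mnm_of (p i), beta i).

Let pos_elem_gen i : pos_elem D (gen i).
Proof.
split; [exact: (lg_base D i) | | exact: Hbeta].
have [l hl] := Hp i; rewrite mdegE (bigD1 l) //= mnmE.
by apply: leq_trans (leq_addr _ _); rewrite lt0n.
Qed.

Let precedes_gen i j : bool :=
  if excluded_middle_informative (precedes (gen i) (gen j)) then true else false.

Let precedes_genP i j : reflect (precedes (gen i) (gen j)) (precedes_gen i j).
Proof. by rewrite /precedes_gen; case: excluded_middle_informative => h; constructor. Qed.

Let precedes_gen_acyclic i j : precedes_gen i j -> ~~ connect precedes_gen j i.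
Proof.
move=> /precedes_genP Pij; apply/negP => /connectP [q pq iE].
have pp : precedes_path D (gen j) (map gen q).
  elim: q j pq {Pij iE} => [|l q IH] j //= /andP [/precedes_genP Pjl pq].
  by split; [exact: pos_elem_gen | exact: Pjl | exact: IH].
by apply: (precedes_acyclic HK Hfin (pos_elem_gen j) pp); rewrite last_map -iE.
Qed.

Lemma fin_dim_admissible_order : exists s, admissible_order p beta s.
Proof.
have [s Hs] := exists_topological_perm precedes_gen_acyclic.
exists s; split => [i j hprop|i j hnp lij].
  rewrite pairingB; apply/eqP; rewrite subr_eq0; apply/eqP.
  have [Li hi vi] := pos_elem_gen (s i); have [Lj hj vj] := pos_elem_gen (s j).
  exact: (fin_dim_proportional_dotm HK Hfin Li Lj hi hj vi vj (proportional_sym _ hprop)).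
have [Li hi vi] := pos_elem_gen (s i); have [Lj hj vj] := pos_elem_gen (s j).
have np : ~ proportional (beta (s j)) (beta (s i)) by move/(proportional_sym vj).
split.
  rewrite pairing_dotm; apply: NNPP => ne.
  have [//|h] := fin_dim_nonproportional_dotm HK Hfin Li Lj hi hj vi vj np.
  suff /Hs : precedes_gen (s j) (s i) by rewrite ltnNge (ltnW lij).
  by apply/precedes_genP; split => //; apply/eqP.
have [t ht] := fin_dim_nonproportional_root Hfin Li Lj hi np.
by exists t; rewrite pairing_chain.
Qed.

End NecessaryCondition.

(** * An admissible order bounds the degrees *)

Section TriangularBound.
Variables (k R0 : nat).

Fixpoint tri_bound (d : nat) (l : 'I_k) : nat :=
  if d is d'.+1 then (R0 + R0 * \sum_(l' : 'I_k | (l < l')%N) tri_bound d' l')%N else 0%N.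

Lemma tri_boundP (m : 'I_k -> nat) :
  (forall l, (0 < m l)%N -> (m l <= R0 + R0 * \sum_(l' : 'I_k | (l < l')%N) m l')%N) ->
  forall d (l : 'I_k), (k - l <= d)%N -> (m l <= tri_bound d l)%N.
Proof.
move=> Hm; elim=> [|d IH] l hd.
  by exfalso; move: hd; rewrite leqn0 subn_eq0 leqNgt ltn_ord.
have [->|ml] := posnP (m l); first by [].
apply: leq_trans (Hm l ml) _; rewrite /= leq_add2l leq_mul2l; apply/orP; right.
apply: leq_sum => l' ll'; apply: IH.
by move: hd ll'; have := ltn_ord l'; lia.
Qed.

End TriangularBound.

Lemma In_allpairs (S1 S2 S3 : Type) (f : S1 -> S2 -> S3) s1 s2 z :
  List.In z [seq f x y | x <- s1, y <- s2] ->
  exists x y, [/\ List.In x s1, List.In y s2 & z = f x y].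
Proof.
elim: s1 => [|x s1 IH] //= H.
case: (List.in_app_or _ _ _ H) => [{}H|/IH [x' [y [h1 h2 ->]]]].
  by have [y [<- hy]] := (List.in_map_iff _ _ _).1 H; exists x, y; split; [left| |].
by exists x', y; split; [right| |].
Qed.

Section SufficientCondition.
Variables (K : fieldType) (HK : [pchar K] =i pred0) (n k : nat)
  (a : 'I_k -> 'X_{1..n}) (b : 'I_k -> 'I_n -> K) (r : 'I_k -> 'I_k -> nat).
Local Notation elem := ('X_{1..n} * ('I_n -> K))%type.
Local Notation P i j := (proportional (b i) (b j)).
Implicit Types (i j l X Y : 'I_k) (x y : elem).

Let selfw i := dotm (b i) (a i).

Hypothesis Hb : forall i, exists z, b i z != 0.
Hypothesis Hprop : forall i j, P i j -> dotm (b i) (a i) = dotm (b i) (a j).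
Hypothesis Hlower : forall i j, ~ P i j -> (i < j)%N -> dotm (b j) (a i) = 0.
Hypothesis Hupper : forall i j, ~ P i j -> (i < j)%N ->
  dotm (b i) (a j) + (r i j)%:R * selfw i = 0.

Let P_sym i j : P i j -> P j i.
Proof. exact: proportional_sym. Qed.

Let P_eq i j : i = j -> P i j.
Proof. by move=> ->; apply: proportional_refl. Qed.

Lemma dotm_lower X i Y : (i < Y)%N -> P X Y -> ~ P i Y -> dotm (b X) (a i) = 0.
Proof. by move=> iY pXY npiY; apply: (proportional_dotm pXY); apply: Hlower. Qed.

Definition below j l := (l < j)%N /\ forall j', (j <= j')%N -> ~ P l j'.

Lemma not_below i l : ~ below i l -> exists2 Y : 'I_k, (i <= Y)%N & P l Y.
Proof.
move=> nA; case: (ltnP l i) => li; last by exists l => //; apply: proportional_refl.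
apply: NNPP => hno; apply: nA; split => // j' ij' plj'.
by apply: hno; exists j'.
Qed.

Lemma below_trans i j l : (i < j)%N -> below i l -> below j l.
Proof.
move=> ij [li h]; split; first exact: ltn_trans li ij.
by move=> j' jj'; apply: h; apply: leq_trans (ltnW ij) jj'.
Qed.

Lemma dotm_sum_below i (m : 'I_k -> nat) X Y :
  (forall l, (0 < m l)%N -> below i l) -> (i <= Y)%N -> P X Y ->
  dotm (b X) (\sum_l a l *+ m l)%MM = 0.
Proof.
move=> Hm iY pXY; rewrite dotm_sum big1 // => l _.
have [->|ml] := posnP (m l); first by rewrite mulm0n dotm0.
have [li Hl] := Hm l ml; rewrite dotmMn (proportional_dotm pXY) ?mulr0 //.
by apply: Hlower; [apply: Hl | exact: leq_trans li iY].
Qed.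

Let Pb i j : bool := if excluded_middle_informative (P i j) then true else false.

Let PbP i j : reflect (P i j) (Pb i j).
Proof. by rewrite /Pb; case: excluded_middle_informative => h; constructor. Qed.

Lemma dotm_gen l l' : dotm (b l) (a l') =
  selfw l * ((Pb l' l)%:R - ((l < l')%N && ~~ Pb l l')%:R * (r l l')%:R).
Proof.
case: (PbP l' l) => [pl'l|npl'l].
  rewrite /selfw (Hprop (P_sym pl'l)).
  by case: (PbP l l') => [_|[]]; [rewrite andbF mul0r subr0 mulr1 | exact: P_sym].
have npll' : ~ P l l' by move/P_sym.
case: (PbP l l') => [//|_] /=.
case: (ltngtP l l') => [lt|gt|/val_inj eq] /=.
- have := Hupper npll' lt; rewrite mul1r => /eqP; rewrite addr_eq0 => /eqP ->.
  by rewrite sub0r mulrN mulrC.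
- by rewrite (Hlower npl'l gt) mul0r subr0 mulr0.
- by case: npl'l; apply: P_eq.
Qed.

(* The last clause is the invariant that bounds the multiplicities [m]. *)
Definition typed j c (m : 'I_k -> nat) x := [/\
  x.2 =1 (fun z => c * b j z),
  x.1 = (a j + \sum_l a l *+ m l)%MM,
  forall l, (0 < m l)%N -> below j l /\ selfw l != 0 &
  forall l, below j l -> exists t : nat, dotm (b l) x.1 + t%:R * selfw l = 0].

Definition tame x := x.2 =1 (fun _ => 0) \/ exists j c m, typed j c m x.

Lemma tame_gen i : tame (a i, b i).
Proof.
right; exists i, 1, (fun _ => 0%N); split => //=.
- by move=> z; rewrite mul1r.
- by rewrite big1 ?addm0.
- move=> l [li h]; exists (r l i); apply: Hupper => //.
  exact: h.
Qed.

Lemma tameZ x c : tame x -> tame (x.1, fun z => c * x.2 z).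
Proof.
case=> [h|[j [c' [m [hd rest]]]]]; first by left => z /=; rewrite h mulr0.
by right; exists j, (c * c'), m; split => // z /=; rewrite hd mulrA.
Qed.

Lemma tame_eq x w : tame x -> x.2 =1 w -> tame (x.1, w).
Proof. by move=> Tx /functional_extensionality <-; case: x Tx. Qed.

Definition elem_bracket x y : elem := ((x.1 + y.1)%MM, bracketv x.1 x.2 y.1 y.2).

Lemma dotm_typed j c m x (v : 'I_n -> K) : typed j c m x ->
  dotm v x.1 = dotm v (a j) + dotm v (\sum_l a l *+ m l)%MM.
Proof. by case=> _ -> _ _; rewrite dotmD. Qed.

Lemma tame_bracket_proportional x y i j c1 m1 c2 m2 :
  typed i c1 m1 x -> typed j c2 m2 y -> P i j -> tame (elem_bracket x y).
Proof.
move=> Tx Ty pij; have [hd1 _ hs1 _] := Tx; have [hd2 _ hs2 _] := Ty.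
have hs1' l : (0 < m1 l)%N -> below i l by move=> /hs1 [].
have hs2' l : (0 < m2 l)%N -> below j l by move=> /hs2 [].
have ey : dotm (b j) y.1 = selfw j.
  by rewrite (dotm_typed _ Ty) (dotm_sum_below hs2' (leqnn j)) ?addr0 //; apply: P_eq.
have ex : dotm (b j) x.1 = selfw j.
  rewrite (dotm_typed _ Tx) /selfw (Hprop (P_sym pij)).
  case: (leqP i j) => ij.
    by rewrite (dotm_sum_below hs1' ij) ?addr0 //; apply: P_eq.
  by rewrite (dotm_sum_below hs1' (leqnn i) (P_sym pij)) addr0.
have [c hc] := pij.
left => z /=; rewrite /bracketv (eq_dotm _ hd1) (eq_dotm _ hd2) !dotmZ (eq_dotm _ hc).
by rewrite dotmZ ey ex hd1 hd2 hc; ring.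
Qed.

Lemma typed_coef_nonzero y i j c2 m2 : typed j c2 m2 y -> ~ P i j -> (i < j)%N ->
  dotm (b i) y.1 != 0 -> below j i /\ selfw i != 0.
Proof.
move=> Ty npij ij cn0; have [_ _ hs2 _] := Ty.
have hs2' l : (0 < m2 l)%N -> below j l by move=> /hs2 [].
split.
  apply: NNPP => /not_below [Y jY piY]; case/negP: cn0; apply/eqP.
  have jY' : (j < Y)%N.
    by rewrite ltn_neqAle jY andbT; apply: contra_notN npij => /eqP/val_inj ->.
  have npjY : ~ P j Y by move=> pjY; apply: npij; apply: proportional_trans piY (P_sym pjY).
  by rewrite (dotm_typed _ Ty) (dotm_lower jY' piY npjY) (dotm_sum_below hs2' jY piY) addr0.
apply: contra cn0 => /eqP l0; rewrite (dotm_typed _ Ty) dotm_sum dotm_gen l0 mul0r add0r.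
by apply/eqP/big1 => l _; rewrite dotmMn dotm_gen l0 mul0r mulr0.
Qed.

Lemma typed_bracket_root x y i j c1 m1 c2 m2 l :
  typed i c1 m1 x -> typed j c2 m2 y -> dotm (b i) y.1 != 0 -> below j l ->
  exists t : nat, dotm (b l) (x.1 + y.1)%MM + t%:R * selfw l = 0.
Proof.
move=> Tx Ty cn0 Ajl; have [_ _ hs1 ht1] := Tx; have [_ _ _ ht2] := Ty.
have hs1' l' : (0 < m1 l')%N -> below i l' by move=> /hs1 [].
have [t2 e2] := ht2 l Ajl; rewrite dotmD.
have [Ail|nAil] := classic (below i l).
  have [t1 e1] := ht1 l Ail; exists (t1 + t2)%N; rewrite natrD mulrDl.
  by rewrite addrACA e1 e2 addr0.
have [pli|npli] := classic (P l i).
  have ex : dotm (b l) x.1 = selfw l.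
    by rewrite (dotm_typed _ Tx) /selfw (Hprop pli) (dotm_sum_below hs1' (leqnn i) pli) addr0.
  case: t2 e2 => [|t2] e2.
    case/negP: cn0; apply/eqP; apply: (proportional_dotm (P_sym pli)).
    by move: e2; rewrite mul0r addr0.
  by exists t2; rewrite ex -e2 -addn1 natrD; ring.
have [Y iY plY] := not_below nAil.
have iY' : (i < Y)%N.
  by rewrite ltn_neqAle iY andbT; apply: contra_notN npli => /eqP/val_inj ->.
have npiY : ~ P i Y by move=> piY; apply: npli; apply: proportional_trans plY (P_sym piY).
have ex : dotm (b l) x.1 = 0.
  by rewrite (dotm_typed _ Tx) (dotm_lower iY' plY npiY) (dotm_sum_below hs1' iY plY) addr0.
by exists t2; rewrite ex add0r.
Qed.

Lemma tame_bracket_lt x y i j c1 m1 c2 m2 :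
  typed i c1 m1 x -> typed j c2 m2 y -> ~ P i j -> (i < j)%N -> tame (elem_bracket x y).
Proof.
move=> Tx Ty npij ij; have [hd1 hx1 hs1 _] := Tx; have [hd2 hy1 hs2 _] := Ty.
have f1 : dotm (b j) x.1 = 0.
  rewrite (dotm_typed _ Tx) (Hlower npij ij) (dotm_sum_below _ (ltnW ij)) ?addr0 //.
    by move=> l /hs1 [].
  exact: P_eq.
set coef := dotm (b i) y.1.
have ebr z : bracketv x.1 x.2 y.1 y.2 z = c1 * coef * c2 * b j z.
  by rewrite /bracketv (eq_dotm _ hd1) (eq_dotm _ hd2) !dotmZ f1 hd2 /coef; ring.
have [c0|cn0] := eqVneq coef 0; first by left => z /=; rewrite ebr c0 mulr0 !mul0r.
have [Aji lami] := typed_coef_nonzero Ty npij ij cn0.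
right; exists j, (c1 * coef * c2), (fun l => (m1 l + m2 l + (l == i))%N); split => //=.
- have sum_mulmnD (p q : 'I_k -> nat) :
      (\sum_l a l *+ (p l + q l) = \sum_l a l *+ p l + \sum_l a l *+ q l)%MM.
    rewrite -big_split; apply: eq_bigr => l _.
    by apply/mnmP => z; rewrite !(mnmDE, mulmnE) mulnDr.
  have sum_delta : (\sum_l a l *+ (l == i) = a i)%MM.
    by rewrite (bigD1 i) //= eqxx mulm1n big1 ?addm0 // => l /negbTE ->.
  by rewrite hx1 hy1 !sum_mulmnD sum_delta; apply/mnmP => z; rewrite !mnmDE; lia.
- move=> l; case: (eqVneq l i) => [->|_]; first by split.
  rewrite addn0; have [->|m2l _] := posnP (m2 l); last exact: hs2.
  by rewrite addn0 => /hs1 [Ail ->]; split => //; exact: below_trans ij Ail.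
- by move=> l Ajl; exact: typed_bracket_root Tx Ty cn0 Ajl.
Qed.

Lemma tame_bracket x y : tame x -> tame y -> tame (elem_bracket x y).
Proof.
case=> [hx|[i [c1 [m1 Tx]]]].
  by left => z /=; rewrite /bracketv (eq_dotm _ hx) dot0m hx; ring.
case=> [hy|[j [c2 [m2 Ty]]]].
  by left => z /=; rewrite /bracketv (eq_dotm _ hy) dot0m hy; ring.
have [pij|npij] := classic (P i j); first exact: tame_bracket_proportional Tx Ty pij.
case: (ltngtP i j) => [ij|ji|/val_inj eij]; first exact: tame_bracket_lt Tx Ty npij ij.
  have npji : ~ P j i by move/P_sym.
  have Tyx := tameZ (-1) (tame_bracket_lt Ty Tx npji ji).
  rewrite /elem_bracket addmC; apply: tame_eq Tyx _ => z /=; rewrite /bracketv; ring.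
by case: npij; apply: P_eq.
Qed.

Lemma lie_gen_tame_sum d : lie_gen (fun i => DeltaM (a i) (b i)) d ->
  exists s : seq elem, (forall x, List.In x s -> tame x) /\
    forall f, d f = \sum_(x <- s) DeltaM x.1 x.2 f.
Proof.
elim=> {d} [i| |d1 d2 _ [s1 [h1 e1]] _ [s2 [h2 e2]]|c d _ [s [h e]]|
            d1 d2 _ [s1 [h1 e1]] _ [s2 [h2 e2]]].
- exists [:: (a i, b i)]; split; last by move=> f; rewrite big_seq1.
  by move=> x [<-|[]]; apply: tame_gen.
- by exists [::]; split => // f; rewrite big_nil.
- exists (s1 ++ s2); split; last by move=> f; rewrite big_cat e1 e2.
  by move=> x H; case: (List.in_app_or _ _ _ H) => [/h1|/h2].
- exists [seq (x.1, fun z => c * x.2 z) | x <- s]; split.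
    by move=> x H; have [y [<- /h]] := (List.in_map_iff _ _ _).1 H; apply: tameZ.
  by move=> f; rewrite e big_map scaler_sumr; apply: eq_bigr => x _; apply: scale_DeltaM.
exists [seq elem_bracket x y | x <- s1, y <- s2]; split.
  move=> z H; have [x [y [/h1 hx /h2 hy ->]]] := In_allpairs H.
  exact: tame_bracket.
move=> f; rewrite /lie_bracket big_allpairs_dep /= (e1 (d2 f)) (e2 (d1 f)) (e2 f) (e1 f).
under [X in X - _]eq_bigr => x _ do rewrite DeltaM_sum.
under [X in _ - X]eq_bigr => y _ do rewrite DeltaM_sum.
rewrite [X in _ - X]exchange_big /= -sumrB; apply: eq_bigr => x _.
by rewrite -sumrB; apply: eq_bigr => y _; rewrite -lie_bracket_DeltaM.
Qed.

Let R0 := (\max_(l < k) \max_(l' < k) r l l')%N.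

Lemma typed_mult_bound j c m x : typed j c m x ->
  forall l, (0 < m l)%N -> (m l <= R0 + R0 * \sum_(l' : 'I_k | (l < l')%N) m l')%N.
Proof.
move=> [_ hx hs ht] l ml; have [Ajl lam0] := hs l ml.
have [t et] := ht l Ajl; have [lj Hnp] := Ajl.
have r_le l1 l2 : (r l1 l2 <= R0)%N.
  by apply: leq_trans (leq_bigmax_cond l1 isT); exact: (leq_bigmax_cond l2 isT).
have ej : dotm (b l) (a j) = - ((r l j)%:R * selfw l).
  by apply/eqP; rewrite -addr_eq0; apply/eqP; apply: Hupper => //; apply: Hnp.
move: et; rewrite hx dotmD ej dotm_sum.
under eq_bigr => l' _ do rewrite dotmMn dotm_gen.
set S1 := (\sum_(l' < k) Pb l' l * m l')%N.
set S2 := (\sum_(l' < k) ((l < l')%N && ~~ Pb l l') * (r l l' * m l'))%N.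
have -> : \sum_(l' < k) (m l')%:R * (selfw l * ((Pb l' l)%:R -
      ((l < l')%N && ~~ Pb l l')%:R * (r l l')%:R)) = selfw l * (S1%:R - S2%:R).
  rewrite /S1 /S2 !natr_sum -sumrB mulr_sumr; apply: eq_bigr => l' _.
  by rewrite !natrM; ring.
move=> e; have /eqP : selfw l * ((t + S1)%:R - (r l j + S2)%:R) = 0.
  by rewrite -e !natrD; ring.
rewrite mulf_eq0 (negbTE lam0) /= subr_eq0 => /eqP /(natr_inj_pchar0 HK) e2.
have h1 : (m l <= S1)%N.
  rewrite /S1 (bigD1 l) //=; case: (PbP l l) => [_|[]]; last exact: proportional_refl.
  by rewrite mul1n leq_addr.
have h2 : (S2 <= R0 * \sum_(l' : 'I_k | (l < l')%N) m l')%N.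
  rewrite big_distrr /= [X in (_ <= X)%N]big_mkcond /=.
  rewrite /S2; apply: leq_sum => l' _.
  case: (l < l')%N => //=; case: (Pb l l') => //=; rewrite ?mul0n // mul1n.
  by rewrite leq_mul2r r_le orbT.
apply: leq_trans h1 _; apply: leq_trans (leq_addl t _) _; rewrite e2.
by apply: leq_add => //; apply: r_le.
Qed.

Lemma typed_mdeg_bounded : exists N, forall j c m x, typed j c m x -> (mdeg x.1 <= N)%N.
Proof.
pose Mx := (\max_(l < k) tri_bound R0 k l)%N.
pose Da := (\max_(l < k) mdeg (a l))%N.
exists (Da + \sum_(l < k) Mx * Da)%N => j c m x Tx; have [_ -> _ _] := Tx.
rewrite mdegD mdeg_sum leq_add //; first exact: leq_bigmax_cond.
apply: leq_sum => l _; rewrite mdegMn mulnC leq_mul //; last exact: leq_bigmax_cond.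
apply: leq_trans (tri_boundP (typed_mult_bound Tx) (leq_subr _ _)) _.
exact: leq_bigmax_cond.
Qed.

Lemma admissible_fin_dim : fin_dim (lie_gen (fun i => DeltaM (a i) (b i))).
Proof.
have [N HN] := typed_mdeg_bounded.
apply/fin_dim_spanned; exists (DeltaM_basis K n N) => d /lie_gen_tame_sum [s [hs es]].
apply: in_span_eq (in_span_sum (G := fun x => DeltaM x.1 x.2) _) _ => [x /hs|f];
  last by rewrite es.
case=> [hx|[j [c [m Tx]]]]; last exact: DeltaM_in_span (HN _ _ _ _ Tx).
apply: in_span_eq (in_span0 _) _ => f.
by rewrite /DeltaM big1 ?mulr0 // => l _; rewrite hx scale0r.
Qed.

End SufficientCondition.

Lemma admissible_order_fin_dim (K : fieldType) (HK : [pchar K] =i pred0) (n k : nat)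
    (p : 'I_k -> 'I_n -> nat) (beta : 'I_k -> 'I_n -> K)
    (Hbeta : forall i, exists l, beta i l != 0) (s : {perm 'I_k}) :
  admissible_order p beta s -> fin_dim (lie_gen (fun i => Delta (p i) (beta i))).
Proof.
move=> [H1 H2]; pose a i := mnm_of (p (s i)); pose bb i := beta (s i).
have root i j : exists t : nat, ~ proportional (bb i) (bb j) -> (i < j)%N ->
    dotm (bb i) (a j) + t%:R * dotm (bb i) (a i) = 0.
  have [[np ij]|h] := classic (~ proportional (bb i) (bb j) /\ (i < j)%N); last first.
    by exists 0%N => np ij; case: h.
  have [_ [t ht]] := H2 i j np ij.
  by exists t => _ _; move: ht; rewrite pairing_chain dotmD dotmMn.
have /fin_all_exists [r Hr] i : exists ri : 'I_k -> nat, forall j,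
    ~ proportional (bb i) (bb j) -> (i < j)%N ->
    dotm (bb i) (a j) + (ri j)%:R * dotm (bb i) (a i) = 0.
  by have [ri Hri] := fin_all_exists (root i); exists ri.
have Hprop i j : proportional (bb i) (bb j) -> dotm (bb i) (a i) = dotm (bb i) (a j).
  by move/H1; rewrite pairingB => /eqP; rewrite subr_eq0 => /eqP.
have Hlower i j : ~ proportional (bb i) (bb j) -> (i < j)%N -> dotm (bb j) (a i) = 0.
  by move=> np ij; rewrite -pairing_dotm; exact: (H2 i j np ij).1.
have [t Ht] := admissible_fin_dim HK (fun i => Hbeta (s i)) Hprop Hlower Hr.
by exists t => d /(lie_gen_perm s) /Ht.
Qed.

Unset Implicit Arguments.
Set Strict Implicit.

Theorem theorem2 (K : fieldType) (HK : [pchar K] =i pred0) (n k : nat)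
  (p : 'I_k -> 'I_n -> nat) (beta : 'I_k -> 'I_n -> K)
  (Hbeta : forall i, exists l, beta i l != 0)
  (Hp : forall i, exists l, p i l != 0%N) :
  fin_dim (lie_gen (fun i => Delta (p i) (beta i)))
  <->
  exists s : {perm 'I_k},
    (forall i j : 'I_k, proportional (beta (s i)) (beta (s j)) ->
       pairing (beta (s i)) (fun l => (p (s i) l)%:Z - (p (s j) l)%:Z) = 0) /\
    (forall i j : 'I_k, ~ proportional (beta (s i)) (beta (s j)) -> (i < j)%N ->
       pairing (beta (s j)) (fun l => (p (s i) l)%:Z) = 0 /\
       exists r : nat,
         pairing (beta (s i)) (fun l => (p (s j) l)%:Z + (r * p (s i) l)%:Z) = 0).
Proof.
split=> [Hfin|[s Hs]]; first exact: (fin_dim_admissible_order HK Hbeta Hp Hfin).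
exact: (admissible_order_fin_dim HK Hbeta Hs).
Qed.
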